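(* Let $\mathbf H$ be an $N\times N$ generalized Wigner matrix with parameters $\varepsilon,c_1,C_1,C_2$, and let $\mathbf L$ be an $\mathbf H$-distributed $AB$ label. Then there exist constants $c,C>0$, depending only on $C_2$ and $\varepsilon$, such that the probability that $\mathbf L$ is inadmissible is less than $CN^{-c\log\log N}$.
   Context: A real symmetric $N\times N$ random matrix $\mathbf H=\{h_{ij}\}$ is a generalized Wigner matrix with parameters $\varepsilon\in(0,1)$, $0<c_1<1<C_1$, $C_2>1$ if the entries $\{h_{ij}\}_{1\le i\le j\le N}$ are centered and mutually independent, $h_{ij}=h_{ji}$, and with $s_{ij}=\mathbb E[|h_{ij}|^2]$, $t_i=\sum_j s_{ij}-1$: (A1) $c_1<Ns_{ij}<C_1$; (A2) $|t_i|<C_1N^{-\varepsilon}$; (A3) $\mathbb E[|h_{ij}\sqrt N|^{2+\varepsilon}]<C_2$. Let $p_{ij}=\mathbb P[|h_{ij}|<N^{-\varepsilon/10}]$. An $AB$ label is a symmetric $N\times N$ array $\mathbf L=\{L_{ij}\}$ with entries in $\{A,B\}$. $\mathbf L$ is $\mathbf H$-distributed if $\{L_{ij}\}_{i\le j}$ are mutually independent with $\mathbb P[L_{ij}=A]=p_{ij}$ and $\mathbb P[L_{ij}=B]=1-p_{ij}$. Indices $i,j$ are linked if $L_{ij}=B$; they are connected if there is a sequence $i=i_1,\dots,i_r=j$ with $i_m$ linked to $i_{m+1}$ for each $m$. An index $i$ is deviant if there exists $j\in[1,N]$ linked to $i$. $\mathbf L$ is inadmissible if either there are at least $N^{1-\varepsilon/20}$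 deviant indices, or there exist $r=\lceil\log\log N\rceil$ distinct indices $j_1,\dots,j_r$ that are pairwise connected; otherwise it is admissible. *)

From HB Require Import structures.
From mathcomp Require Import all_boot all_order all_algebra.
From mathcomp Require Import all_classical all_reals all_analysis.
Set Implicit Arguments. Unset Strict Implicit. Unset Printing Implicit Defensive.
Import Order.TTheory GRing.Theory Num.Theory.
Local Open Scope classical_set_scope.
Local Open Scope ring_scope.

Definition mutually_independent {d} {T : measurableType d} {R : realType}
  (P : probability T R) {I : finType} (S : {set I}) (X : I -> T -> R) : Prop :=
  forall J : {set I}, J \subset S ->
  forall B : I -> set R, (forall i, measurable (B i)) ->
  P (\bigcap_(i in [set k | k \in J]) (X i @^-1` B i)) =
  (\prod_(i in J) P (X i @^-1` B i))%E.

Definition upper_pairs (N : nat) : {set 'I_N * 'I_N} :=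
  [set ij : 'I_N * 'I_N | (ij.1 <= ij.2)%N].

Definition s_entry {d} {T : measurableType d} {R : realType}
  (P : probability T R) (X : T -> R) : R :=
  fine ('E_P[fun w => (X w ^+ 2)%R])%E.

Definition generalized_Wigner {d} {T : measurableType d} {R : realType}
  (P : probability T R) (N : nat) (h : 'I_N -> 'I_N -> {RV P >-> R})
  (eps c1 C1 C2 : R) : Prop :=
  (forall i j, h i j = h j i :> (T -> R)) /\
      mutually_independent P (upper_pairs N) (fun ij => (h ij.1 ij.2 : T -> R)) /\
      (forall i j, ('E_P[h i j] = 0)%E) /\
      (forall i j, c1 < N%:R * s_entry P (h i j) < C1) /\
      (forall i : 'I_N,
                 `|\sum_(j < N) s_entry P (h i j) - 1| < C1 * N%:R `^ (- eps)) /\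
      (forall i j,
        ('E_P[fun w => (`|h i j w * Num.sqrt N%:R| `^ (2 + eps))%R] < C2%:E)%E).

Arguments generalized_Wigner {d T R} P {N} h eps c1 C1 C2.

Definition p_entry {d} {T : measurableType d} {R : realType}
  (P : probability T R) (N : nat) (eps : R) (X : T -> R) : R :=
  fine (P [set w | `|X w| < N%:R `^ (- (eps / 10))]).

Inductive AB := lA | lB.
Definition bool_of_AB (x : AB) : bool := if x is lB then true else false.
Definition AB_of_bool (b : bool) : AB := if b then lB else lA.
Lemma bool_of_ABK : cancel bool_of_AB AB_of_bool. Proof. by case. Qed.
HB.instance Definition _ := Finite.copy AB (can_type bool_of_ABK).

Definition label (N : nat) := {ffun 'I_N * 'I_N -> AB}.

Definition symmetric_label N (L : label N) : bool :=
  [forall i : 'I_N, forall j : 'I_N, L (i, j) == L (j, i)].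

Definition linked N (L : label N) : rel 'I_N := fun i j => L (i, j) == lB.

Definition connected_idx N (L : label N) (i j : 'I_N) : bool :=
  connect (linked L) i j.

Definition deviant N (L : label N) : {set 'I_N} :=
  [set i | [exists j, linked L i j]].

Definition r_of {R : realType} (N : nat) : nat :=
  absz (Num.max 0%Z (Num.ceil (ln (ln (N%:R : R))))).

Definition inadmissible {R : realType} N (eps : R) (L : label N) : Prop :=
  (N%:R `^ (1 - eps / 20) <= (#|deviant L|)%:R)
  \/ exists js : seq 'I_N,
       [/\ size js = r_of (R := R) N, uniq js &
           forall a b, a \in js -> b \in js -> connected_idx L a b].

(* Probability that an H-distributed label (independent entries L_ij,
   i <= j, with P[L_ij = A] = p_ij) satisfies the event E. *)
Definition label_prob {R : realType} N (p : 'I_N -> 'I_N -> R)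
  (E : label N -> Prop) : R :=
  \sum_(L : label N | symmetric_label L && `[< E L >])
     \prod_(ij in upper_pairs N)
        (if L ij == lA then p ij.1 ij.2 else 1 - p ij.1 ij.2).

From HB Require Import structures.
From mathcomp Require Import all_boot all_order all_algebra.
From mathcomp Require Import all_classical all_reals all_analysis.
From mathcomp Require Import ring lra measurable_realfun.
Import Order.TTheory GRing.Theory Num.Theory.

(* A label with many deviant indices has many B-links above the diagonal.  The
   links are independent, each present with probability at most
   Q = C2 N^(-1-eps/5) by Markov's inequality for the (2+eps)-th moment, so the
   exponential moment of their number is at most exp(N^2 Q (e-1)) = exp(o(N^(1-eps/20))),
   and Chernoff's bound handles the first event.  A set of r = ceil(log log N)
   pairwise connected indices carries a spanning tree, coded by an injective
   labelling of its r vertices and a parent map; there are at most N^r r^r codes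
   and all r-1 edges of a given one are links with probability at most Q^(r-1),
   which sums to N^(1+eps/5-(eps/5) r) (C2 r)^r = N^(-Omega(eps log log N)).  For
   small N the bound exceeds 1 by the choice of C. *)

Section SpanningSequence.
Variables (T : finType) (e : rel T).

Lemma path_exit_edge {s : seq T} {x p} :
  path e x p -> x \in s -> last x p \notin s ->
  exists w z, [/\ w \in s, z \notin s & e w z].
Proof.
elim: p x => [|z p IH] x /=; first by move=> _ ->.
move=> /andP[exz pz] xs lz.
have [zs|zs] := boolP (z \in s); first exact: IH pz zs lz.
by exists x, z.
Qed.

Lemma connect_spanning_seq x0 k : 0 < k -> k <= #|[set y | connect e x0 y]| ->
  exists s : seq T, exists par : nat -> nat,
    [/\ size s = k, uniq s, nth x0 s 0 = x0,
        {subset s <= [set y | connect e x0 y]} &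
        forall i, 0 < i < k -> par i < i /\ e (nth x0 s (par i)) (nth x0 s i)].
Proof.
elim: k => [//|k IH] _ hk.
have [->|kpos] := posnP k.
  exists [:: x0], id; split => //; last by move=> [|[|i]].
  by move=> y; rewrite inE => /eqP ->; rewrite inE connect0.
have [s [par [ss us s0 sC sE]]] := IH kpos (ltnW hk).
have [y yC ys] : exists2 y, y \in [set y | connect e x0 y] & y \notin s.
  apply/exists_inP; rewrite -negb_forall_in; apply/negP => /forall_inP hs.
  have : #|[set y | connect e x0 y]| <= #|s|.
    by apply: subset_leq_card; apply/fintype.subsetP => z /hs.
  by rewrite (card_uniqP us) ss leqNgt hk.
have x0s : x0 \in s by rewrite -s0 mem_nth // ss.
move: yC; rewrite inE => /connectP [q pq ly].
rewrite ly in ys; have [w [z [ws zs ewz]]] := path_exit_edge pq x0s ys.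
exists (rcons s z), (fun i => if i == k then index w s else par i); split.
- by rewrite size_rcons ss.
- by rewrite rcons_uniq zs us.
- by rewrite nth_rcons ss kpos.
- move=> u; rewrite mem_rcons in_cons => /orP[/eqP ->|/sC //].
  rewrite inE; apply: connect_trans (connect1 ewz).
  by move: (sC _ ws); rewrite inE.
move=> i /andP[i0]; rewrite ltnS leq_eqVlt => /orP[/eqP ->|ik].
  have wk : index w s < k by rewrite -ss index_mem.
  by rewrite eqxx !nth_rcons ss ltnn eqxx wk nth_index.
have [h1 h2] := sE i (introT andP (conj i0 ik)).
by rewrite (ltn_eqF ik) !nth_rcons ss ik (ltn_trans h1 ik).
Qed.

End SpanningSequence.

Arguments connect_spanning_seq {T e x0 k}.

Section Links.
Variable N : nat.

Definition upair (x y : 'I_N) : 'I_N * 'I_N := if x <= y then (x, y) else (y, x).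

Lemma upair_upper x y : upair x y \in upper_pairs N.
Proof. by rewrite /upair inE; case: (leqP x y) => //= /ltnW. Qed.

Lemma upair_eq x y x' y' :
  upair x y = upair x' y' -> (x = x' /\ y = y') \/ (x = y' /\ y = x').
Proof. by rewrite /upair; case: ifP => _; case: ifP => _ [-> ->]; auto. Qed.

Lemma symmetric_label_upair (L : label N) x y :
  symmetric_label L -> L (upair x y) = L (x, y).
Proof.
move=> /forallP sL; rewrite /upair; case: ifP => // _.
by move/forallP: (sL y) => /(_ x) /eqP.
Qed.

Definition link_pairs (L : label N) := [set ij in upper_pairs N | L ij == lB].

Lemma card_deviant_le (L : label N) :
  symmetric_label L -> #|deviant L| <= 2 * #|link_pairs L|.
Proof.
move=> sL.
have sub : deviant L \subset (fst @: link_pairs L) :|: (snd @: link_pairs L).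
  apply/fintype.subsetP => i; rewrite inE => /existsP [j /eqP ij_link].
  have : upair i j \in link_pairs L.
    by rewrite inE upair_upper symmetric_label_upair ?ij_link.
  rewrite /upair finset.in_setU; case: ifP => _ hB; apply/orP; [left | right].
    by apply/imsetP; exists (i, j).
  by apply/imsetP; exists (j, i).
apply: leq_trans (subset_leq_card sub) _.
apply: leq_trans (leq_card_setU _ _) _.
by rewrite mul2n -addnn leq_add // leq_imset_card.
Qed.

End Links.

Arguments upair {N}.
Arguments link_pairs {N}.
Arguments card_deviant_le {N L}.
Arguments symmetric_label_upair {N L x y}.

Section TreeCodes.
Variables N r : nat.

(* A rooted labelled tree on r vertices: vertex k is [code.1 k], and every
   vertex k > 0 is attached to its parent [code.2 k < k]. *)
Definition tree_code := ({ffun 'I_r -> 'I_N} * {ffun 'I_r -> 'I_r})%type.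

Definition is_tree_code (code : tree_code) :=
  injectiveb code.1 && [forall k : 'I_r, (0 < k) ==> (code.2 k < k)].

Definition code_edges (code : tree_code) : {set 'I_N * 'I_N} :=
  [set upair (code.1 k) (code.1 (code.2 k)) | k in [set k : 'I_r | 0 < k]].

Lemma code_edges_upper code : code_edges code \subset upper_pairs N.
Proof. by apply/fintype.subsetP => ij /imsetP [k _ ->]; exact: upair_upper. Qed.

Lemma card_ord_gt0 : #|[set k : 'I_r | 0 < k]| = r.-1.
Proof.
case: r => [|r']; first by apply/eqP; rewrite cards_eq0; apply/eqP/setP => -[].
have -> : [set k : 'I_r'.+1 | 0 < k] = ~: [set ord0].
  by apply/setP => k; rewrite !inE lt0n.
by rewrite cardsC1 card_ord.
Qed.

Lemma card_code_edges code : is_tree_code code -> #|code_edges code| = r.-1.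
Proof.
case: code => v par /andP[/= /injectiveP v_inj /forallP par_lt].
rewrite card_in_imset ?card_ord_gt0 // => k l; rewrite !inE => k0 l0 /upair_eq.
have := par_lt k; have := par_lt l; rewrite k0 l0 /= => pl pk.
case=> [[/v_inj -> //]|[/v_inj kl /v_inj lk]].
by move: pl pk; rewrite -kl -lk => /ltn_trans h /h; rewrite ltnn.
Qed.

Lemma card_tree_code : #|{: tree_code}| = N ^ r * r ^ r.
Proof. by rewrite card_prod !card_ffun !card_ord. Qed.

Lemma connected_tree_code (L : label N) (js : seq 'I_N) :
  symmetric_label L -> 0 < r -> size js = r -> uniq js ->
  (forall a b, a \in js -> b \in js -> connected_idx L a b) ->
  exists2 code, is_tree_code code & [forall ij in code_edges code, L ij == lB].
Proof.
move=> sL r0 sj uj conn.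
case: js sj uj conn => [|x0 js'] sj uj conn; first by rewrite -sj in r0.
have hC : r <= #|[set y | connect (linked L) x0 y]|.
  rewrite -sj -(card_uniqP uj); apply: subset_leq_card; apply/fintype.subsetP => a ha.
  by rewrite inE; apply: conn => //; rewrite mem_head.
have [s [par [ss us _ _ sE]]] := connect_spanning_seq r0 hC.
have par_lt (k : 'I_r) : 0 < k -> par k < k /\ linked L (nth x0 s (par k)) (nth x0 s k).
  by move=> k0; apply: sE; rewrite k0 ltn_ord.
exists ([ffun k : 'I_r => nth x0 s k], [ffun k : 'I_r => insubd k (par k)]).
  apply/andP; split.
    apply/injectiveP => a b /=; rewrite !ffunE => /eqP.
    by rewrite nth_uniq ?ss // => /eqP/val_inj.
  apply/forallP => k /=; apply/implyP => /par_lt [pk _].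
  by rewrite ffunE val_insubd (ltn_trans pk (ltn_ord k)).
apply/forall_inP => ij /imsetP [k]; rewrite inE /= !ffunE => /par_lt [pk lk] ->.
rewrite val_insubd (ltn_trans pk (ltn_ord k)) symmetric_label_upair //.
by move/forallP: sL => /(_ (nth x0 s k)) /forallP /(_ (nth x0 s (par k))) /eqP ->.
Qed.

End TreeCodes.

Arguments is_tree_code {N r}.
Arguments code_edges {N r}.
Arguments code_edges_upper {N r}.
Arguments card_code_edges {N r code}.
Arguments card_tree_code {N r}.
Arguments connected_tree_code {N r L js}.

Local Open Scope ring_scope.

Lemma prod_subset_mkcond {R : comRingType} {I : finType} {A S : {set I}} (F : I -> R) :
  S \subset A -> \prod_(i in S) F i = \prod_(i in A) (if i \in S then F i else 1).
Proof.
move=> /fintype.subsetP sSA; rewrite -big_mkcondr; apply: eq_bigl => i.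
by apply/idP/andP => [iS|[]//]; rewrite sSA.
Qed.

Section SymmetricLabelSum.
Variables (R : realType) (N : nat).

Definition upper_part (L : label N) : label N :=
  [ffun ij => if ij \in upper_pairs N then L ij else lA].

Lemma upper_part_inj :
  {in [pred L : label N | symmetric_label L] &, injective upper_part}.
Proof.
move=> L1 L2; rewrite !inE => s1 s2 e; apply/ffunP => -[i j].
have e' ij : ij \in upper_pairs N -> L1 ij = L2 ij.
  by move=> hij; move/ffunP: e => /(_ ij); rewrite !ffunE hij.
rewrite -(symmetric_label_upair s1) -(symmetric_label_upair s2).
exact/e'/upair_upper.
Qed.

Lemma sum_AB (f : AB -> R) : \sum_(a : AB) f a = f lA + f lB.
Proof. by rewrite (bigD1 lA) //= (bigD1 lB) //= big_pred0 ?addr0 // => -[]. Qed.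

(* Only the entries on and above the diagonal are free, so the sum over
   symmetric labels injects into the expansion of a product over pairs. *)
Lemma sum_symmetric_label_prod_le (G : 'I_N * 'I_N -> AB -> R) :
  (forall ij a, 0 <= G ij a) ->
  \sum_(L : label N | symmetric_label L) \prod_(ij in upper_pairs N) G ij (L ij)
  <= \prod_(ij in upper_pairs N) (G ij lA + G ij lB).
Proof.
move=> G0.
pose F ij a : R := if ij \in upper_pairs N then G ij a else (a == lA)%:R.
have F0 ij a : 0 <= F ij a by rewrite /F; case: ifP.
have prodF (L : label N) : \prod_(ij in upper_pairs N) G ij (L ij) =
    \prod_ij F ij (upper_part L ij).
  rewrite [RHS](bigID (mem (upper_pairs N))) /= [X in _ * X]big1 ?mulr1.
    by apply: eq_bigr => ij hij; rewrite /F /upper_part ffunE hij.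
  by move=> ij hij; rewrite /F /upper_part ffunE (negbTE hij).
have -> : \prod_(ij in upper_pairs N) (G ij lA + G ij lB) =
          \prod_ij \sum_(a : AB) F ij a.
  rewrite [RHS](bigID (mem (upper_pairs N))) /= [X in _ * X]big1 ?mulr1.
    by apply: eq_bigr => ij hij; rewrite sum_AB /F hij.
  by move=> ij hij; rewrite sum_AB /F (negbTE hij) /= addr0.
have -> : \sum_(L : label N | symmetric_label L) \prod_(ij in upper_pairs N) G ij (L ij)
    = \sum_(L in [set L : label N | symmetric_label L]) \prod_ij F ij (upper_part L ij).
  by apply: eq_big => [L|L _]; rewrite ?inE ?prodF.
rewrite bigA_distr_bigA /=.
rewrite -(big_imset (fun f : label N => \prod_ij F ij (f ij))) /=; last first.
  by move=> L1 L2; rewrite !inE => h1 h2; apply: upper_part_inj.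
rewrite [X in _ <= X](bigID (mem (upper_part @: [set L | symmetric_label L]))) /=.
by rewrite lerDl sumr_ge0 // => f _; rewrite prodr_ge0.
Qed.

End SymmetricLabelSum.

Arguments sum_symmetric_label_prod_le {R N} G.

Definition inadmissible_bound {R : realType} (N : nat) (eps Q : R) : R :=
  let r := r_of (R := R) N in
  expR ((N ^ 2)%:R * (Q * (expR 1 - 1)) - N%:R `^ (1 - eps / 20) / 2)
  + (N ^ r * r ^ r)%:R * Q ^+ r.-1.

Section LabelExpectation.
Variables (R : realType) (N : nat) (p : 'I_N -> 'I_N -> R).
Hypothesis p01 : forall i j, 0 <= p i j <= 1.

Definition entry_weight (ij : 'I_N * 'I_N) (a : AB) : R :=
  if a == lA then p ij.1 ij.2 else 1 - p ij.1 ij.2.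

Definition label_weight (L : label N) : R :=
  \prod_(ij in upper_pairs N) entry_weight ij (L ij).

Definition label_expect (f : label N -> R) : R :=
  \sum_(L | symmetric_label L) label_weight L * f L.

Lemma entry_weight_ge0 ij a : 0 <= entry_weight ij a.
Proof.
have /andP[p0 p1] := p01 ij.1 ij.2.
by rewrite /entry_weight; case: ifP; rewrite ?subr_ge0.
Qed.

Lemma label_weight_ge0 L : 0 <= label_weight L.
Proof. by rewrite prodr_ge0 // => ij _; exact: entry_weight_ge0. Qed.

Lemma label_probE E : label_prob p E = label_expect (fun L => (`[< E L >] : nat)%:R).
Proof.
rewrite /label_prob big_mkcondr; apply: eq_bigr => L _.
by case: asboolP => _; rewrite ?mulr1 ?mulr0.
Qed.

Lemma ler_label_expect f g :
  (forall L, symmetric_label L -> f L <= g L) -> label_expect f <= label_expect g.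
Proof.
by move=> fg; apply: ler_sum => L /fg; apply: ler_wpM2l; exact: label_weight_ge0.
Qed.

Lemma label_expectD f g :
  label_expect (fun L => f L + g L) = label_expect f + label_expect g.
Proof. by rewrite -big_split; apply: eq_bigr => L _; rewrite mulrDr. Qed.

Lemma label_expectZ c f : label_expect (fun L => c * f L) = c * label_expect f.
Proof. by rewrite /label_expect mulr_sumr; apply: eq_bigr => L _; rewrite mulrCA. Qed.

Lemma label_expect_prod_le (g : 'I_N * 'I_N -> AB -> R) :
  (forall ij a, 0 <= g ij a) ->
  label_expect (fun L => \prod_(ij in upper_pairs N) g ij (L ij))
  <= \prod_(ij in upper_pairs N)
       (p ij.1 ij.2 * g ij lA + (1 - p ij.1 ij.2) * g ij lB).
Proof.
move=> g0; rewrite /label_expect (eq_bigr (fun L : label N =>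
  \prod_(ij in upper_pairs N) (entry_weight ij (L ij) * g ij (L ij)))) => [|L _].
  pose G ij a := entry_weight ij a * g ij a.
  apply: le_trans (sum_symmetric_label_prod_le G _) _.
    by move=> ij a; rewrite mulr_ge0 ?entry_weight_ge0.
  rewrite le_eqVlt; apply/orP; left; apply/eqP/eq_bigr => ij _.
  by rewrite /G /entry_weight /= mulrC [X in _ + X]mulrC.
by rewrite big_split.
Qed.

Lemma label_expect1_le : label_expect (fun=> 1) <= 1.
Proof.
have := label_expect_prod_le (fun _ _ => 1) (fun _ _ => ler01).
rewrite [X in _ <= X]big1 => [|ij _]; last by rewrite !mulr1 addrC subrK.
by apply: le_trans; apply: ler_label_expect => L _; rewrite prodr_const expr1n.
Qed.

Lemma label_prob_le1 E : label_prob p E <= 1.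
Proof.
rewrite label_probE; apply: le_trans label_expect1_le.
by apply: ler_label_expect => L _; case: asboolP.
Qed.

Lemma label_prob_le_expect (E : label N -> Prop) f :
  (forall L, 0 <= f L) -> (forall L, symmetric_label L -> E L -> 1 <= f L) ->
  label_prob p E <= label_expect f.
Proof.
move=> f0 fE; rewrite label_probE; apply: ler_label_expect => L sL.
by case: asboolP => [/(fE L sL)|_].
Qed.

Lemma label_expect_all_linked_le (S : {set 'I_N * 'I_N}) :
  S \subset upper_pairs N ->
  label_expect (fun L => \prod_(ij in S) (L ij == lB)%:R)
  <= \prod_(ij in S) (1 - p ij.1 ij.2).
Proof.
move=> sS; pose g ij (a : AB) : R := if ij \in S then (a == lB)%:R else 1.
have g0 ij a : 0 <= g ij a by rewrite /g; case: ifP.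
apply: le_trans (_ : _ <= label_expect (fun L =>
  \prod_(ij in upper_pairs N) g ij (L ij))) _.
  by apply: ler_label_expect => L _; rewrite (prod_subset_mkcond _ sS) lexx.
apply: le_trans (label_expect_prod_le g g0) _.
rewrite (prod_subset_mkcond _ sS) le_eqVlt; apply/orP; left; apply/eqP/eq_bigr => ij _.
by rewrite /g; case: ifP => _ /=; rewrite ?mulr0 ?add0r ?mulr1 // addrC subrK.
Qed.

Variable Q : R.
Hypotheses (Q0 : 0 <= Q) (p_ge : forall i j, 1 - p i j <= Q).

Lemma label_expect_expR_links_le (D : R) :
  label_expect (fun L => expR ((#|link_pairs L|)%:R - D))
  <= expR ((N ^ 2)%:R * (Q * (expR 1 - 1)) - D).
Proof.
have e1 : 0 <= expR 1 - 1 :> R by rewrite subr_ge0 -expR0 ler_expR.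
pose g (ij : 'I_N * 'I_N) (a : AB) : R := if a == lB then expR 1 else 1.
have g0 ij a : 0 <= g ij a by rewrite /g; case: ifP; rewrite ?expR_ge0.
have -> : (fun L => expR ((#|link_pairs L|)%:R - D)) =
    (fun L => expR (- D) * \prod_(ij in upper_pairs N) g ij (L ij)).
  apply/funext => L; rewrite expRD mulrC; congr (_ * _).
  rewrite -[X in expR X]mulr1 expRM_natl -prodr_const.
  rewrite (prod_subset_mkcond (A := upper_pairs N)); last first.
    by apply/fintype.subsetP => ij; rewrite inE => /andP[].
  by apply: eq_bigr => ij hij; rewrite /g inE hij.
rewrite label_expectZ expRD mulrC ler_wpM2r ?expR_ge0 //.
apply: le_trans (label_expect_prod_le g g0) _.
apply: le_trans (_ : _ <= \prod_(ij in upper_pairs N) expR (Q * (expR 1 - 1))) _.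
  apply: ler_prod => ij _; have /andP[p0 p1] := p01 ij.1 ij.2.
  rewrite addr_ge0 ?mulr_ge0 ?g0 ?subr_ge0 //=.
  apply: le_trans (expR_ge1Dx _); rewrite /g /= mulr1.
  have -> : p ij.1 ij.2 + (1 - p ij.1 ij.2) * expR 1
          = 1 + (1 - p ij.1 ij.2) * (expR 1 - 1) by ring.
  by rewrite lerD2l ler_wpM2r.
rewrite prodr_const -expRM_natl ler_expR ler_wpM2r ?mulr_ge0 // ler_nat.
by apply: leq_trans (max_card _) _; rewrite card_prod card_ord.
Qed.

Definition linked_codes r (L : label N) : R :=
  \sum_(code : tree_code N r | is_tree_code code)
    \prod_(ij in code_edges code) (L ij == lB)%:R.

Lemma linked_codes_ge0 (r : nat) (L : label N) : 0 <= linked_codes r L.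
Proof. by rewrite sumr_ge0 // => code _; rewrite prodr_ge0. Qed.

Lemma linked_codes_ge1 {r : nat} {L : label N} {js : seq 'I_N} :
  symmetric_label L -> (0 < r)%N -> size js = r -> uniq js ->
  (forall a b, a \in js -> b \in js -> connected_idx L a b) ->
  1 <= linked_codes r L.
Proof.
move=> sL r0 sj uj conn.
have [code tc /forall_inP linked] := connected_tree_code sL r0 sj uj conn.
rewrite /linked_codes (bigD1 code) //= big1 => [|ij /linked /eqP -> //].
by rewrite lerDl sumr_ge0 // => c _; rewrite prodr_ge0.
Qed.

Lemma label_expect_linked_codes_le (r : nat) :
  label_expect (linked_codes r) <= (N ^ r * r ^ r)%:R * Q ^+ r.-1.
Proof.
rewrite /label_expect /linked_codes; under eq_bigr do rewrite mulr_sumr.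
rewrite exchange_big /=.
apply: le_trans (_ : _ <= \sum_(code : tree_code N r) Q ^+ r.-1) _; last first.
  by rewrite sumr_const card_tree_code mulr_natl.
rewrite [X in _ <= X](bigID is_tree_code) /= -[X in X <= _]addr0 lerD //; last first.
  by rewrite sumr_ge0 // => *; rewrite exprn_ge0.
apply: ler_sum => code tc.
apply: le_trans (label_expect_all_linked_le _ (code_edges_upper code)) _.
rewrite -(card_code_edges tc) -prodr_const; apply: ler_prod => ij _.
by have /andP[_ p1] := p01 ij.1 ij.2; rewrite subr_ge0 p1 p_ge.
Qed.

Lemma label_prob_inadmissible_le (eps : R) :
  label_prob p (inadmissible eps) <= inadmissible_bound N eps Q.
Proof.
rewrite /inadmissible_bound; set r := r_of N.
set D := N%:R `^ (1 - eps / 20) / 2.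
have [r0|r_gt0] := posnP r.
  apply: le_trans (label_prob_le1 _) _.
  by rewrite r0 /= mul1n expr0 mulr1 lerDr expR_ge0.
pose f L := expR ((#|link_pairs L|)%:R - D) + linked_codes r L.
apply: le_trans (label_prob_le_expect _ f _ _) _.
- by move=> L; rewrite addr_ge0 ?expR_ge0 ?linked_codes_ge0.
- move=> L sL [many_deviant | [js [sj uj conn]]].
  + have D_le : D <= (#|link_pairs L|)%:R.
      have := card_deviant_le sL; rewrite -(ler_nat R) natrM /D; lra.
    have : 1 <= expR ((#|link_pairs L|)%:R - D).
      by rewrite -[X in X <= _]expR0 ler_expR subr_ge0.
    by have := linked_codes_ge0 r L; rewrite /f; lra.
  + have := linked_codes_ge1 sL r_gt0 sj uj conn.
    by have := expR_ge0 ((#|link_pairs L|)%:R - D); rewrite /f; lra.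
by rewrite label_expectD lerD ?label_expect_expR_links_le ?label_expect_linked_codes_le.
Qed.

End LabelExpectation.

Arguments label_prob_le1 {R N p} p01 E.
Arguments label_prob_inadmissible_le {R N p} p01 {Q} Q0 p_ge eps.

Section EntryTail.
Local Open Scope classical_set_scope.
Variables (R : realType) (d : measure_display) (T : measurableType d).
Variables (P : probability T R) (h : {RV P >-> R}).

Lemma measurable_norm_lt (a : R) : measurable [set w | `|h w| < a].
Proof.
have mh : measurable_fun setT (h : T -> R) by exact: measurable_funPT.
have : measurable_fun setT (fun w => `|h w| < a).
  exact: measurable_fun_ltr (measurableT_comp (@normr_measurable R setT) mh)
    (measurable_cst a).
move=> /(_ measurableT [set true] I); rewrite setTI.
by congr measurable; apply/seteqP; split => w /=.
Qed.

Lemma p_entry_ge0_le1 N eps : 0 <= p_entry P N eps h <= 1.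
Proof.
rewrite /p_entry; set A := (X in P X).
have fA : P A \is a fin_num by exact/fin_num_measure/measurable_norm_lt.
rewrite fine_ge0 ?measure_ge0 //=.
by have := fine_le fA (fin_numE 1%E) (probability_le1 P (measurable_norm_lt _)).
Qed.

Lemma moment_tail_le (a s q : R) : 0 < a -> 0 <= s -> 0 <= q ->
  (((a * s) `^ q)%:E * P [set w | (a <= `|h w|)%R]
   <= 'E_P[fun w => (`|h w * s| `^ q)%R])%E.
Proof.
move=> a0 s0 q0; pose f x := (x * s) `^ q.
have f_nd : {in Num.nneg &, {homo f : x y / x <= y}}.
  move=> x y; rewrite !nnegrE => x0 y0 xy.
  by apply: ge0_ler_powR; rewrite ?nnegrE ?mulr_ge0 ?ler_wpM2r.
have := markov h a0
  (measurableT_comp (measurable_powR q) (@mulrr_measurable R setT s))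
  (fun r _ => powR_ge0 _ _) f_nd.
have -> : f \o (fun x => `|x|) \o h = (fun w => `|h w * s| `^ q).
  by apply/funext => w /=; rewrite /f normrM (ger0_norm s0).
by congr (_ * P _ <= _)%E; apply/seteqP; split => w /=; rewrite lee_fin.
Qed.

Lemma one_sub_p_entry_le (N : nat) (eps C2 : R) : (1 <= N)%N -> 0 <= eps <= 1 ->
  ('E_P[fun w => (`|h w * Num.sqrt N%:R| `^ (2 + eps))%R] < C2%:E)%E ->
  1 - p_entry P N eps h <= C2 * N%:R `^ (- (1 + eps / 5)).
Proof.
move=> N1 /andP[e0 e1] hE.
have N0 : 0 < N%:R :> R by rewrite ltr0n.
set a := N%:R `^ (- (eps / 10)); have a0 : 0 < a by rewrite powR_gt0.
set s := Num.sqrt (N%:R : R); have s0 : 0 <= s by exact: sqrtr_ge0.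
have := moment_tail_le a s (2 + eps) a0 s0 (addr_ge0 (ler0n _ 2) e0).
rewrite /p_entry -/a.
set A := [set w | `|h w| < a].
have fA : P A \is a fin_num by exact/fin_num_measure/measurable_norm_lt.
have -> : [set w | a <= `|h w|] = ~` A.
  by apply/seteqP; split => w /=; rewrite leNgt => /negP.
rewrite probability_setC; last exact: measurable_norm_lt.
rewrite -(fineK fA) -EFinB -EFinM => /le_lt_trans /(_ hE); rewrite lte_fin.
have C20 : 0 < C2.
  by rewrite -lte_fin (le_lt_trans _ hE) // expectation_ge0 // => w; exact: powR_ge0.
have fa0 : 0 < (a * s) `^ (2 + eps) by rewrite powR_gt0 // mulr_gt0 // sqrtr_gt0.
rewrite -ltr_pdivlMl // mulrC => /ltW /le_trans; apply; rewrite ler_pM2l //.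
have -> : (a * s) `^ (2 + eps) = N%:R `^ ((2^-1 - eps / 10) * (2 + eps)).
  by rewrite /s /a -powR12_sqrt ?ler0n // -powRD ?lt0r_neq0 ?implybT // powRrM addrC.
rewrite -powRN; apply: ler_powR; first by rewrite ler1n.
by rewrite lerN2; nra.
Qed.

End EntryTail.

Arguments p_entry_ge0_le1 {R d T P} h N eps.
Arguments one_sub_p_entry_le {R d T P} h {N eps C2}.

Section Asymptotics.
Variable R : realType.

Lemma expR_half (z : R) : expR z / 2 = expR (z - ln 2).
Proof. by rewrite expRD expRN lnK // posrE. Qed.

Lemma ln_le_sub1 (z : R) : 0 < z -> ln z <= z - 1.
Proof.
move=> z0; rewrite -ler_expR lnK ?posrE //.
by apply: le_trans (expR_ge1Dx _); rewrite addrC subrK.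
Qed.

Lemma ln2_le2 : ln (2 : R) <= 2.
Proof. exact/ltW/ln_sublinear. Qed.

(* [K e^((1-d)x)] is negligible against [e^((1-d/4)x)], which beats
   [(d/4) x y + ln 2] for [y <= x] once [x] is large. *)
Lemma link_count_term_le (d K x y : R) :
  0 < d < 1 -> 0 < K -> 16 * K / (3 * d) <= x -> 200 <= x -> y <= x ->
  expR (K * expR ((1 - d) * x) - expR ((1 - d / 4) * x) / 2)
  <= expR (- (d / 4) * x * y) / 2.
Proof.
move=> /andP[d0 d1] K0 hxK hx200 yx.
rewrite [X in _ <= X]expR_half ler_expR.
set u := expR ((1 - d) * x); have u0 : 0 < u by exact: expR_gt0.
have -> : expR ((1 - d / 4) * x) = u * expR (3 * d / 4 * x).
  by rewrite /u -expRD; congr expR; field.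
have K_small : 4 * K <= expR (3 * d / 4 * x).
  apply: le_trans (expR_ge1Dx _).
  have : 16 * K <= x * (3 * d) by rewrite -ler_pdivrMr ?mulr_gt0.
  nra.
have Ku_le : K * u <= u * expR (3 * d / 4 * x) / 4.
  by move: K_small; set E := expR _ => K_small; nra.
have half_le : expR (x / 2) <= u * expR (3 * d / 4 * x).
  by rewrite /u -expRD ler_expR; nra.
have cubic_le : 1 + (x / 2) ^+ 3 / 6 <= expR (x / 2).
  by have := @expR_ge1Dxn R (x / 2) 2; rewrite (_ : (3`!)%:R = 6 :> R) //; apply; lra.
have xy_le : d / 4 * x * y <= x * x.
  have x0 : 0 <= x by lra.
  have : d / 4 * y <= x by nra.
  nra.
have : x * x + 2 <= (1 + (x / 2) ^+ 3 / 6) / 4.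
  have -> : (x / 2) ^+ 3 = x * x * x / 8 by rewrite !exprS expr0; field.
  nra.
by have := ln2_le2; lra.
Qed.

Lemma cluster_exponent_le {d c x y m : R} :
  0 < d < 1 -> 0 <= c -> 2 * c / d <= x -> 48 / d + 4 <= y -> expR y = x ->
  0 <= m -> y <= m + 1 < y + 1 ->
  (m + 1) * ln (m + 1) + m * (c - (1 + d) * x) + (m + 1) * x
  <= - (d / 4) * x * y - ln 2.
Proof.
move=> /andP[d0 d1] c0 hxc hy exy m0 /andP[ym my].
have y1 : 1 <= y.
  have : 0 < 48 / d by rewrite divr_gt0.
  lra.
have lnm0 : 0 <= ln (m + 1) by rewrite ln_ge0 // lerDr.
have lnm : ln (m + 1) <= m.
  by have := @ln_le_sub1 (m + 1); rewrite addrK; apply; lra.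
have x_ge : 1 + y ^+ 2 / 2 <= x.
  have := @expR_ge1Dxn R y 1; rewrite (_ : (2`!)%:R = 2 :> R) // exy.
  by apply; lra.
have dx_ge : 2 * c <= d * x.
  have -> : 2 * c = d * (2 * c / d) by field; rewrite gt_eqF.
  by rewrite ler_wpM2l // ltW.
have dy_ge : 48 + 4 * d <= d * y.
  have -> : 48 + 4 * d = d * (48 / d + 4) by field; rewrite gt_eqF.
  by rewrite ler_wpM2l // ltW.
have x0 : 0 <= x.
  have : 0 <= y ^+ 2 / 2 by rewrite divr_ge0 // sqr_ge0.
  lra.
have entropy_le : (m + 1) * ln (m + 1) <= (y + 1) * y.
  have : (m + 1) * ln (m + 1) <= (m + 1) * m by rewrite ler_wpM2l // addr_ge0.
  nra.
have drift_le : m * (c - d * x) <= (y - 1) * (- (d * x) / 2) by nra.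
have : (48 + 4 * d) * x <= d * x * y by nra.
have : y <= y ^+ 2 by rewrite expr2; nra.
by have := ln2_le2; lra.
Qed.

Lemma cluster_term_le (d C2 x y : R) (r : nat) :
  0 < d < 1 -> 1 < C2 -> 2 * ln C2 / d <= x -> 48 / d + 4 <= y -> expR y = x ->
  y <= r%:R < y + 1 ->
  expR x ^+ r * r%:R ^+ r * (C2 * expR (- (1 + d) * x)) ^+ r.-1
  <= expR (- (d / 4) * x * y) / 2.
Proof.
move=> d01 C21 hxc hy exy /andP[yr ry].
case: r yr ry => [|m] yr ry.
  have : 0 < 48 / d by case/andP: d01 => d0 _; rewrite divr_gt0.
  by move: yr; rewrite /=; lra.
have e1 : m.+1%:R ^+ m.+1 = expR (m.+1%:R * ln m.+1%:R) :> R.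
  by rewrite expRM_natl lnK // posrE ltr0n.
have e2 : (C2 * expR (- (1 + d) * x)) ^+ m = expR (m%:R * (ln C2 + - (1 + d) * x)).
  by rewrite expRM_natl expRD lnK // posrE; lra.
rewrite /= e1 e2 -expRM_natl -!expRD [X in _ <= X]expR_half ler_expR -natr1.
rewrite -natr1 in yr ry.
have /andP/(cluster_exponent_le d01 (ln_ge0 (ltW C21)) hxc hy exy (ler0n _ m)) :=
  conj yr ry.
lra.
Qed.

End Asymptotics.

Lemma powR_expR (R : realType) (a z : R) : 0 < a -> a `^ z = expR (z * ln a).
Proof. by move=> a0; rewrite /powR gt_eqF. Qed.

Lemma ln_le_id {R : realType} {x : R} : 0 <= x -> ln x <= x.
Proof.
rewrite le_eqVlt => /orP[/eqP <-|/ln_sublinear/ltW //].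
by rewrite (ln0 (lexx 0)).
Qed.

Lemma r_of_bounds {R : realType} {N : nat} : 0 <= ln (ln (N%:R : R)) ->
  ln (ln (N%:R : R)) <= (r_of (R := R) N)%:R < ln (ln (N%:R : R)) + 1.
Proof.
rewrite /r_of; set y := ln (ln _) => y0.
have cy : (0 <= Num.ceil y)%Z by rewrite ceil_ge0; lra.
rewrite max_r // natr_absz ger0_norm // ceil_ge /=.
by have := ceilB1_lt y; rewrite intrD /=; lra.
Qed.

Lemma inadmissible_bound_expR (R : realType) (N : nat) (eps C2 del : R) :
  0 < N%:R :> R ->
  inadmissible_bound N eps (C2 * N%:R `^ (- (1 + del)))
  = expR (C2 * (expR 1 - 1) * expR ((1 - del) * ln (N%:R : R))
          - expR ((1 - eps / 20) * ln (N%:R : R)) / 2)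
    + expR (ln (N%:R : R)) ^+ r_of (R := R) N
      * (r_of (R := R) N)%:R ^+ r_of (R := R) N
      * (C2 * expR (- (1 + del) * ln (N%:R : R))) ^+ (r_of (R := R) N).-1.
Proof.
move=> N0; rewrite /inadmissible_bound /=; set x := ln (N%:R : R); set r := r_of N.
have Nx : N%:R = expR x by rewrite lnK.
rewrite !powR_expR // -/x natrM !natrX Nx.
suff -> : expR x ^+ 2 * (C2 * expR (- (1 + del) * x) * (expR 1 - 1))
    = C2 * (expR 1 - 1) * expR ((1 - del) * x) by [].
have <- : expR (2%:R * x) * expR (- (1 + del) * x) = expR ((1 - del) * x).
  by rewrite -expRD; congr expR; ring.
by rewrite expRM_natl; ring.
Qed.

Lemma inadmissible_bound_le {R : realType} {eps C2 : R} : 0 < eps < 1 -> 1 < C2 ->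
  exists2 X : R, 0 <= X & forall N : nat, X <= ln (N%:R : R) ->
    inadmissible_bound N eps (C2 * N%:R `^ (- (1 + eps / 5)))
    <= expR (- (eps / 20) * ln (ln (N%:R : R)) * ln (N%:R : R)).
Proof.
move=> /andP[e0 e1] C21; set d := eps / 5.
have d01 : 0 < d < 1 by apply/andP; split; rewrite /d; lra.
set K := C2 * (expR 1 - 1).
have K0 : 0 < K by rewrite mulr_gt0 ?subr_gt0 -?expR0 ?ltr_expR //; lra.
have lnC0 : 0 < ln C2 by exact: ln_gt0.
have dpos : 0 < d by case/andP: d01.
have t1 : 0 < expR (48 / d + 4) by exact: expR_gt0.
have t2 : 0 < 2 * ln C2 / d by apply: divr_gt0 => //; lra.
have t3 : 0 < 16 * K / (3 * d) by apply: divr_gt0; apply: mulr_gt0 => //; lra.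
exists (expR (48 / d + 4) + 2 * ln C2 / d + 16 * K / (3 * d) + 200); first lra.
move=> N xN.
have N0 : 0 < N%:R :> R.
  case: N xN => [|n] xN; last by rewrite ltr0n.
  by move: xN; rewrite mulr0n (ln0 (lexx 0)); lra.
set x := ln (N%:R : R) in xN *; set y := ln x.
have exy : expR y = x by rewrite lnK // posrE; lra.
have yx : y <= x by apply: ln_le_id; lra.
have hy : 48 / d + 4 <= y by rewrite -[_ + 4]expRK ler_ln ?posrE //; lra.
have y0 : 0 <= y.
  have : 0 < 48 / d by rewrite divr_gt0.
  lra.
have /andP[yr ry] := r_of_bounds y0.
rewrite inadmissible_bound_expR // -/x -/K.
have -> : 1 - eps / 20 = 1 - d / 4 by rewrite /d; field.
have -> : - (eps / 20) * y * x = - (d / 4) * x * y by rewrite /d; field.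
rewrite [X in _ <= X]splitr lerD //.
  by apply: link_count_term_le; lra.
by apply: cluster_term_le => //; first lra; apply/andP.
Qed.

Theorem lemma3p11 (R : realType) (eps C2 : R) :
  0 < eps < 1 -> 1 < C2 ->
  exists c C : R, 0 < c /\ 0 < C /\
  forall (c1 C1 : R), 0 < c1 < 1 -> 1 < C1 ->
  forall (N : nat), (1 <= N)%N ->
  forall (d : measure_display) (T : measurableType d) (P : probability T R)
         (h : 'I_N -> 'I_N -> {RV P >-> R}),
  generalized_Wigner P h eps c1 C1 C2 ->
  label_prob (fun i j => p_entry P N eps (h i j)) (inadmissible eps)
    < C * N%:R `^ (- c * ln (ln (N%:R : R))).
Proof.
move=> eps01 C21; have /andP[eps0 eps1] := eps01.
have [X X0 X_large] := inadmissible_bound_le eps01 C21.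
have c0 : 0 < eps / 20 by rewrite divr_gt0.
exists (eps / 20), (2 * expR (eps / 20 * X * X)).
split=> //; split; first by rewrite mulr_gt0 ?expR_gt0.
move=> c1 C1 _ _ N N1 d T P h [_ [_ [_ [_ [_ moment]]]]].
have N0 : 0 < N%:R :> R by rewrite ltr0n.
have p01 i j := p_entry_ge0_le1 (h i j) N eps.
have eps01' : 0 <= eps <= 1 by apply/andP; split; apply: ltW.
have tail i j := one_sub_p_entry_le (h i j) N1 eps01' (moment i j).
rewrite powR_expR // -mulrA -expRD; set x := ln (N%:R : R).
have x0 : 0 <= x by rewrite ln_ge0 // ler1n.
set b := - (eps / 20) * ln x * x.
suff : label_prob (fun i j => p_entry P N eps (h i j)) (inadmissible eps)
    <= expR (eps / 20 * X * X + b).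
  by move/le_lt_trans; apply; rewrite ltr_pMl ?expR_gt0 // ltr1n.
have [small|large] := ltP x X.
  apply: le_trans (label_prob_le1 p01 _) _.
  rewrite -[X in X <= _]expR0 ler_expR /b.
  have : ln x * x <= X * X by have := ln_le_id x0; nra.
  nra.
have Q0 : 0 <= C2 * N%:R `^ (- (1 + eps / 5)) by rewrite mulr_ge0 ?powR_ge0 //; lra.
apply: le_trans (label_prob_inadmissible_le p01 Q0 tail eps) _.
apply: le_trans (X_large N large) _.
by rewrite ler_expR lerDr; nra.
Qed.
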